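(* Let $\mathbb{I}>0$ and, for $\ell>0$, let $g(\ell)=4\ell^2\int_0^\infty u^2\,\Phi\big(-\frac{u\ell\sqrt{\mathbb{I}}}{2}\big)\phi(u)\,du$. Then $g$ is maximized at $\ell_{opt}=\frac{2.426}{\sqrt{\mathbb{I}}}$ (constant given to three decimals), and the corresponding acceptance rate $$\alpha_{opt}=4\int_0^\infty\Phi\Big(-\frac{u\ell_{opt}\sqrt{\mathbb{I}}}{2}\Big)\phi(u)\,du$$ equals $0.439$ up to three decimal places.
   Context: $\Phi$ and $\phi$ are the standard normal cdf and density. In the paper, $g(\ell)$ is the diffusion speed of the limiting Langevin diffusion of the additive TMCMC chain for i.i.d. product targets $\prod_i f(x_i)$, with $\mathbb{I}=E_f[(f'(X)/f(X))^2]$, and $\alpha_{opt}$ is the limiting expected acceptance rate at scaling $\ell_{opt}$. *)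

From Stdlib Require Import Reals.
From Coquelicot Require Import Coquelicot.
Open Scope R_scope.

Definition phi (u : R) : R := exp (- u ^ 2 / 2) / sqrt (2 * PI).

Definition Phi (x : R) : R := RInt_gen phi (Rbar_locally m_infty) (at_point x).

Definition g (I l : R) : R :=
  4 * l ^ 2 * RInt_gen (fun u => u ^ 2 * Phi (- (u * l * sqrt I) / 2) * phi u)
                       (at_point 0) (Rbar_locally p_infty).

Definition alpha (I l : R) : R :=
  4 * RInt_gen (fun u => Phi (- (u * l * sqrt I) / 2) * phi u)
               (at_point 0) (Rbar_locally p_infty).

(* Put [c = l sqrt I / 2]; then [Phi (- u l sqrt I / 2) = 1/2 - Phi0 (c u)].  Differentiating
   Owen's T function [T(h, c)] in [h] produces primitives of both integrands, so that
   [alpha = 1 - 2 atan c / PI] and [g = 8 / (PI I) * c^2 (PI/2 - atan c - c / (1 + c^2))]; the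
   same function gives the tail bound on [Phi] through [Phi0 t^2 + 2 T(t, 1) = 1/4].  The
   [c]-dependent factor of [g] has derivative [2 c D(c)], where [D] decreases on [[0, sqrt 3]]
   and is negative beyond, so [g] has a unique maximiser at the zero [c*] of [D].  Taylor bounds
   for [atan], with Machin's formula for [PI], place [c*] in [[1.2130, 1.21324]], which yields
   [l_opt sqrt I = 2 c*] and [alpha_opt = 1 - 2 atan c* / PI] to three decimals. *)

From Stdlib Require Import Reals Lra Psatz FunctionalExtensionality.
From Coquelicot Require Import Coquelicot.
Open Scope R_scope.

(* Coquelicot states many equations at a structure carrier convertible to [R] (e.g. [R_AbsRing]),
   where [ring] and [field] do not apply. *)
Ltac eq_at_R := match goal with |- ?a = ?b => change (@eq R a b) end.
Ltac auto_derive_R := auto_derive; try eq_at_R.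

Lemma continuous_of_ex_derive (f : R -> R) x : ex_derive f x -> continuous f x.
Proof. apply (ex_derive_continuous (V := R_NormedModule)). Qed.

Lemma ex_RInt_of_continuous (f : R -> R) a b :
  (forall x, continuous f x) -> ex_RInt f a b.
Proof. intros Hf. apply (ex_RInt_continuous (V := R_CompleteNormedModule)); auto. Qed.

Lemma is_RInt_of_is_derive (f df : R -> R) a b :
  (forall x, is_derive f x (df x)) -> (forall x, continuous df x) ->
  is_RInt df a b (f b - f a).
Proof. intros Hf Hdf. apply (is_RInt_derive (V := R_CompleteNormedModule)); auto. Qed.

Lemma RInt_const_R (c a b : R) : RInt (fun _ => c) a b = (b - a) * c.
Proof. rewrite (RInt_const (V := R_CompleteNormedModule)). reflexivity. Qed.

Lemma constant_of_is_derive_0 (f : R -> R) :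
  (forall x, is_derive f x 0) -> forall x, f x = f 0.
Proof.
  intros Hf x.
  assert (H : is_RInt (fun _ => 0) 0 x (f x - f 0)).
  { apply is_RInt_of_is_derive; [exact Hf|intros; apply continuous_const]. }
  apply (is_RInt_unique (V := R_CompleteNormedModule)) in H.
  rewrite RInt_const_R in H. lra.
Qed.

Lemma incr_of_is_derive_pos (f df : R -> R) a b :
  a < b -> (forall x, is_derive f x (df x)) -> (forall x, a < x < b -> 0 < df x) ->
  f a < f b.
Proof.
  intros Hab Hf Hdf.
  destruct (MVT_cor2 f df a b Hab) as [c [Hc Hcab]].
  { intros; apply is_derive_Reals, Hf. }
  specialize (Hdf c Hcab). nra.
Qed.

Lemma nondecr_of_is_derive_nonneg (f df : R -> R) a b :
  a <= b -> (forall x, is_derive f x (df x)) -> (forall x, a < x < b -> 0 <= df x) ->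
  f a <= f b.
Proof.
  intros [Hab | <-] Hf Hdf; [|lra].
  destruct (MVT_cor2 f df a b Hab) as [c [Hc Hcab]].
  { intros; apply is_derive_Reals, Hf. }
  specialize (Hdf c Hcab). nra.
Qed.

Lemma exp_le a b : a <= b -> exp a <= exp b.
Proof. intros [H | ->]; [left; apply exp_increasing|]; lra. Qed.

Lemma small_inv_eventually (k : R) (eps : posreal) :
  exists M, 1 <= M /\ forall t, M < t -> Rabs k / t < eps.
Proof.
  pose proof (cond_pos eps).
  assert (0 <= Rabs k / eps) by (apply Rdiv_le_0_compat; [apply Rabs_pos|lra]).
  exists (Rabs k / eps + 1). split; [lra|]. intros t Ht.
  apply (Rmult_lt_reg_r t); [lra|].
  replace (Rabs k / t * t) with (Rabs k / eps * eps) by (field; lra). nra.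
Qed.

Lemma is_RInt_gen_at_point_p_infty (f F : R -> R) (L k : R) :
  (forall b, is_RInt f 0 b (F b - F 0)) ->
  (forall t, 1 <= t -> Rabs (F t - L) <= k / t) ->
  is_RInt_gen f (at_point 0) (Rbar_locally p_infty) (L - F 0).
Proof.
  intros HF Hrate P [eps Heps].
  destruct (small_inv_eventually k eps) as [M [HM Hsmall]].
  apply (Filter_prod _ _ _ (fun a => a = 0) (fun b => M < b)); [reflexivity|exists M; auto|].
  intros a b -> Hb. exists (F b - F 0). split; [apply HF|].
  apply Heps. change (Rabs (F b - F 0 - (L - F 0)) < eps).
  replace (F b - F 0 - (L - F 0)) with (F b - L) by ring.
  eapply Rle_lt_trans; [apply Hrate; lra|]. eapply Rle_lt_trans; [|apply Hsmall, Hb].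
  apply Rmult_le_compat_r; [left; apply Rinv_0_lt_compat; lra|apply Rle_abs].
Qed.

Lemma is_RInt_gen_m_infty_at_point (f F : R -> R) (L k y : R) :
  (forall a, is_RInt f a y (F y - F a)) ->
  (forall t, t <= -1 -> Rabs (F t - L) <= k / - t) ->
  is_RInt_gen f (Rbar_locally m_infty) (at_point y) (F y - L).
Proof.
  intros HF Hrate P [eps Heps].
  destruct (small_inv_eventually k eps) as [M [HM Hsmall]].
  apply (Filter_prod _ _ _ (fun a => a < - M) (fun b => b = y)); [exists (- M); auto|reflexivity|].
  intros a b Ha ->. exists (F y - F a). split; [apply HF|].
  apply Heps. change (Rabs (F y - F a - (F y - L)) < eps).
  replace (F y - F a - (F y - L)) with (- (F a - L)) by ring. rewrite Rabs_Ropp.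
  eapply Rle_lt_trans; [apply Hrate; lra|]. eapply Rle_lt_trans; [|apply (Hsmall (- a)); lra].
  apply Rmult_le_compat_r; [left; apply Rinv_0_lt_compat; lra|apply Rle_abs].
Qed.

Lemma sqrt_2PI_gt0 : 0 < sqrt (2 * PI).
Proof. apply sqrt_lt_R0. pose proof PI_RGT_0. lra. Qed.

Lemma is_derive_phi x : is_derive phi x (- x * phi x).
Proof.
  unfold phi. pose proof sqrt_2PI_gt0. auto_derive_R; [exact I|].
  replace (- x ^ 2 / 2) with (- (x * (x * 1)) * / 2) by field. field. lra.
Qed.

Lemma continuous_phi x : continuous phi x.
Proof. apply continuous_of_ex_derive. eexists. apply is_derive_phi. Qed.

Lemma phi_gt0 x : 0 < phi x.
Proof. unfold phi. apply Rdiv_lt_0_compat; [apply exp_pos|apply sqrt_2PI_gt0]. Qed.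

Lemma phi_opp x : phi (- x) = phi x.
Proof. unfold phi. do 3 f_equal. ring. Qed.

Lemma phi_le_exp x : phi x <= exp (- x ^ 2 / 2).
Proof.
  unfold phi. pose proof PI2_3_2. pose proof (exp_pos (- x ^ 2 / 2)).
  assert (1 <= sqrt (2 * PI)) by (rewrite <- sqrt_1; apply sqrt_le_1_alt; lra).
  apply (Rmult_le_reg_r (sqrt (2 * PI))); [lra|].
  unfold Rdiv. rewrite Rmult_assoc, Rinv_l by lra. nra.
Qed.

Lemma phi_mul_phi a b : phi a * phi b = exp (- (a ^ 2 + b ^ 2) / 2) / (2 * PI).
Proof.
  unfold phi. pose proof sqrt_2PI_gt0. pose proof PI_RGT_0.
  replace (exp (- (a ^ 2 + b ^ 2) / 2)) with (exp (- a ^ 2 / 2) * exp (- b ^ 2 / 2))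
    by (rewrite <- exp_plus; f_equal; field).
  rewrite <- (sqrt_sqrt (2 * PI)) at 3 by lra. field. lra.
Qed.

Definition Phi0 (t : R) : R := RInt phi 0 t.

Lemma is_derive_Phi0 t : is_derive Phi0 t (phi t).
Proof.
  apply (is_derive_RInt phi Phi0 0); [|apply continuous_phi].
  apply filter_forall. intros b. apply (RInt_correct (V := R_CompleteNormedModule)).
  apply ex_RInt_of_continuous, continuous_phi.
Qed.

Lemma Phi0_0 : Phi0 0 = 0.
Proof. apply (RInt_point (V := R_CompleteNormedModule)). Qed.

Lemma Phi0_opp t : Phi0 (- t) = - Phi0 t.
Proof.
  assert (Hder : forall x, is_derive (fun t => Phi0 (- t) + Phi0 t) x 0).
  { intros x. auto_derive_R.
    - split; [eexists; apply is_derive_Phi0|split; [eexists; apply is_derive_Phi0|exact I]].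
    - rewrite !(is_derive_unique _ _ _ (is_derive_Phi0 _)), phi_opp. ring. }
  pose proof (constant_of_is_derive_0 _ Hder t) as E.
  simpl in E. rewrite Ropp_0, Phi0_0 in E. lra.
Qed.

Lemma Phi0_ge0 t : 0 <= t -> 0 <= Phi0 t.
Proof.
  intros Ht. apply RInt_ge_0; [exact Ht|apply ex_RInt_of_continuous, continuous_phi|].
  intros; left; apply phi_gt0.
Qed.

Definition owen_kernel (h x : R) : R := exp (- (h ^ 2 * (1 + x ^ 2)) / 2) / (1 + x ^ 2).
Definition owen_kernel_dh (h x : R) : R := - (h * exp (- (h ^ 2 * (1 + x ^ 2)) / 2)).
Definition owenT (h c : R) : R := / (2 * PI) * RInt (owen_kernel h) 0 c.

Lemma is_derive_owen_kernel h x : is_derive (fun h => owen_kernel h x) h (owen_kernel_dh h x).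
Proof.
  unfold owen_kernel, owen_kernel_dh. pose proof (pow2_ge_0 x).
  auto_derive_R; [simpl in *; lra|].
  replace (- (h ^ 2 * (1 + x ^ 2)) / 2) with (- (h * (h * 1) * (1 + x * (x * 1))) * / 2) by field.
  field. simpl in *. lra.
Qed.

Lemma continuity_2d_owen_kernel_dh h x : continuity_2d_pt owen_kernel_dh h x.
Proof.
  unfold owen_kernel_dh.
  apply continuity_2d_pt_opp, continuity_2d_pt_mult; [apply continuity_2d_pt_id1|].
  apply (continuity_1d_2d_pt_comp exp (fun u v => - (u ^ 2 * (1 + v ^ 2)) / 2)).
  { apply derivable_continuous_pt, derivable_pt_exp. }
  apply (continuity_2d_pt_ext (fun u v => (- 1 / 2) * ((u * u) * (1 + v * v)))); [intros; field|].
  repeat first [apply continuity_2d_pt_mult | apply continuity_2d_pt_plus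
    | apply continuity_2d_pt_const | apply continuity_2d_pt_id1 | apply continuity_2d_pt_id2].
Qed.

Lemma continuous_owen_kernel h x : continuous (owen_kernel h) x.
Proof. apply continuous_of_ex_derive. unfold owen_kernel. auto_derive_R. pose proof (pow2_ge_0 x). lra. Qed.

Lemma owen_kernel_dh_phi h t : owen_kernel_dh h t = - (2 * PI) * h * (phi h * phi (h * t)).
Proof.
  rewrite phi_mul_phi. unfold owen_kernel_dh.
  replace (- (h ^ 2 + (h * t) ^ 2) / 2) with (- (h ^ 2 * (1 + t ^ 2)) / 2) by field.
  field. pose proof PI_RGT_0. lra.
Qed.

Lemma RInt_owen_kernel_dh h c : RInt (owen_kernel_dh h) 0 c = - (2 * PI) * phi h * Phi0 (h * c).
Proof.
  set (F t := - (2 * PI) * phi h * Phi0 (h * t)).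
  assert (H : is_RInt (owen_kernel_dh h) 0 c (F c - F 0)).
  { apply is_RInt_of_is_derive.
    - intros t. unfold F. auto_derive_R; [eexists; apply is_derive_Phi0|].
      rewrite (is_derive_unique _ _ _ (is_derive_Phi0 _)), owen_kernel_dh_phi. ring.
    - intros t. apply continuous_of_ex_derive. unfold owen_kernel_dh. auto_derive. exact I. }
  transitivity (F c - F 0); [apply (is_RInt_unique (V := R_CompleteNormedModule)), H|].
  unfold F. rewrite Rmult_0_r, Phi0_0. eq_at_R. ring.
Qed.

Lemma is_derive_owenT h c : is_derive (fun h => owenT h c) h (- phi h * Phi0 (h * c)).
Proof.
  assert (Hder : forall h t, Derive (fun h => owen_kernel h t) h = owen_kernel_dh h t)
    by (intros; apply is_derive_unique, is_derive_owen_kernel).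
  assert (Hint : is_derive (fun h => RInt (owen_kernel h) 0 c) h (RInt (owen_kernel_dh h) 0 c)).
  { rewrite <- (RInt_ext (fun t => Derive (fun h => owen_kernel h t) h)) by (intros; apply Hder).
    apply (is_derive_RInt_param_aux owen_kernel 0 c h).
    - apply filter_forall. intros y t _. eexists. apply is_derive_owen_kernel.
    - intros t _. apply (continuity_2d_pt_ext owen_kernel_dh); [intros; symmetry; apply Hder|].
      apply continuity_2d_owen_kernel_dh.
    - apply filter_forall. intros y. apply ex_RInt_of_continuous, continuous_owen_kernel.
    - apply (ex_RInt_ext (owen_kernel_dh h)); [intros; symmetry; apply Hder|].
      apply ex_RInt_of_continuous. intros x. apply continuous_of_ex_derive.
      unfold owen_kernel_dh. auto_derive_R. exact I. }
  replace (- phi h * Phi0 (h * c)) with (/ (2 * PI) * RInt (owen_kernel_dh h) 0 c).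
  - apply (is_derive_scal _ _ _ _ Hint).
  - rewrite RInt_owen_kernel_dh. field. pose proof PI_RGT_0. lra.
Qed.

Lemma owenT_0 c : owenT 0 c = atan c / (2 * PI).
Proof.
  assert (H : is_RInt (owen_kernel 0) 0 c (atan c - atan 0)).
  { apply (is_RInt_ext (V := R_NormedModule)) with (f := fun x => / (1 + x ^ 2)).
    - intros x _. unfold owen_kernel. replace (- (0 ^ 2 * (1 + x ^ 2)) / 2) with 0 by field.
      rewrite exp_0. change (/ (1 + x ^ 2) = 1 / (1 + x ^ 2)). field.
      pose proof (pow2_ge_0 x). lra.
    - apply is_RInt_of_is_derive; [intros; apply is_derive_Reals, derivable_pt_lim_atan|].
      intros x. apply continuous_of_ex_derive. auto_derive_R. pose proof (pow2_ge_0 x). lra. }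
  unfold owenT. rewrite (is_RInt_unique (V := R_CompleteNormedModule) _ _ _ _ H), atan_0.
  field. pose proof PI_RGT_0. lra.
Qed.

Lemma owenT_bounds h c : 0 <= c -> 0 <= owenT h c <= c * exp (- h ^ 2 / 2) / (2 * PI).
Proof.
  intros Hc. unfold owenT. pose proof PI_RGT_0.
  assert (Hk : forall x, 0 <= owen_kernel h x <= exp (- h ^ 2 / 2)).
  { intros x. unfold owen_kernel. pose proof (pow2_ge_0 x). pose proof (pow2_ge_0 h).
    pose proof (exp_pos (- (h ^ 2 * (1 + x ^ 2)) / 2)).
    assert (exp (- (h ^ 2 * (1 + x ^ 2)) / 2) <= exp (- h ^ 2 / 2)) by (apply exp_le; nra).
    split; [apply Rdiv_le_0_compat; lra|].
    apply (Rmult_le_reg_r (1 + x ^ 2)); [lra|].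
    unfold Rdiv. rewrite Rmult_assoc, Rinv_l by lra. nra. }
  assert (Hex : ex_RInt (owen_kernel h) 0 c) by (apply ex_RInt_of_continuous, continuous_owen_kernel).
  assert (H0 : 0 <= RInt (owen_kernel h) 0 c) by (apply RInt_ge_0; auto; intros; apply Hk).
  assert (H1 : RInt (owen_kernel h) 0 c <= c * exp (- h ^ 2 / 2)).
  { replace (c * exp (- h ^ 2 / 2)) with (RInt (fun _ => exp (- h ^ 2 / 2)) 0 c)
      by (rewrite RInt_const_R; eq_at_R; ring).
    apply RInt_le; auto; [apply ex_RInt_of_continuous; intros; apply continuous_const|].
    intros; apply Hk. }
  assert (0 < / (2 * PI)) by (apply Rinv_0_lt_compat; lra).
  split; [nra|]. unfold Rdiv. rewrite (Rmult_comm _ (/ (2 * PI))). nra.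
Qed.

(* The left side has derivative zero and equals [2 atan 1 / (2 PI)] at [t = 0]; letting
   [t -> +oo] this is Owen's proof that [phi] has total mass one. *)
Lemma Phi0_sqr_owenT t : Phi0 t ^ 2 + 2 * owenT t 1 = 1 / 4.
Proof.
  assert (Hder : forall x, is_derive (fun t => Phi0 t ^ 2 + 2 * owenT t 1) x 0).
  { intros x. auto_derive_R.
    - repeat split; eexists; [apply is_derive_Phi0|apply is_derive_owenT].
    - rewrite (is_derive_unique _ _ _ (is_derive_Phi0 _)),
        (is_derive_unique _ _ _ (is_derive_owenT _ _)). rewrite !Rmult_1_r. ring. }
  rewrite (constant_of_is_derive_0 _ Hder t), Phi0_0, owenT_0, atan_1.
  field. pose proof PI_RGT_0. lra.
Qed.

Lemma exp_neg_half_sqr_le u :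
  0 < u -> exp (- u ^ 2 / 2) <= 1 / u /\ u * exp (- u ^ 2 / 2) <= 2 / u.
Proof.
  intros Hu. pose proof (exp_ineq1_le (u ^ 2 / 2)). pose proof (exp_pos (u ^ 2 / 2)).
  replace (exp (- u ^ 2 / 2)) with (/ exp (u ^ 2 / 2)) by (rewrite <- exp_Ropp; f_equal; field).
  split.
  - unfold Rdiv. rewrite Rmult_1_l. apply Rinv_le_contravar; nra.
  - apply (Rmult_le_reg_r (exp (u ^ 2 / 2) * u)); [nra|].
    replace (u * / exp (u ^ 2 / 2) * (exp (u ^ 2 / 2) * u)) with (u * u) by (field; lra).
    replace (2 / u * (exp (u ^ 2 / 2) * u)) with (2 * exp (u ^ 2 / 2)) by (field; lra).
    nra.
Qed.

Lemma owenT_le_div h c : 0 <= c -> 0 < h -> owenT h c <= c / (6 * h).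
Proof.
  intros Hc Hh. pose proof (owenT_bounds h c Hc) as [_ HT].
  pose proof (proj1 (exp_neg_half_sqr_le h Hh)). pose proof PI_RGT_0. pose proof PI2_3_2.
  eapply Rle_trans; [exact HT|].
  apply (Rmult_le_reg_r (2 * PI * h)); [nra|].
  replace (c * exp (- h ^ 2 / 2) / (2 * PI) * (2 * PI * h)) with (c * (exp (- h ^ 2 / 2) * h))
    by (field; lra).
  replace (c / (6 * h) * (2 * PI * h)) with (c * (PI / 3)) by (field; lra).
  apply Rmult_le_compat_l; [exact Hc|].
  assert (exp (- h ^ 2 / 2) * h <= 1 / h * h) by (apply Rmult_le_compat_r; lra).
  replace (1 / h * h) with 1 in * by (field; lra). lra.
Qed.

Lemma Phi0_le_half t : 0 <= t -> Phi0 t <= 1 / 2.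
Proof.
  intros Ht. pose proof (Phi0_sqr_owenT t). pose proof (Phi0_ge0 t Ht).
  pose proof (proj1 (owenT_bounds t 1 ltac:(lra))). nra.
Qed.

Lemma half_sub_Phi0_le t : 0 < t -> 1 / 2 - Phi0 t <= 1 / t.
Proof.
  intros Ht. pose proof (Phi0_sqr_owenT t). pose proof (Phi0_ge0 t ltac:(lra)).
  pose proof (owenT_le_div t 1 ltac:(lra) Ht).
  assert (1 / (6 * t) <= 1 / t / 6) by (right; field; lra).
  assert (0 < 1 / t) by (apply Rdiv_lt_0_compat; lra).
  nra.
Qed.

Lemma Phi_eq y : Phi y = 1 / 2 + Phi0 y.
Proof.
  unfold Phi. replace (1 / 2 + Phi0 y) with (Phi0 y - - (1 / 2)) by ring.
  apply is_RInt_gen_unique, (is_RInt_gen_m_infty_at_point phi Phi0 (- (1 / 2)) 1 y).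
  - intros a. apply is_RInt_of_is_derive; [apply is_derive_Phi0|apply continuous_phi].
  - intros t Ht. rewrite <- (Ropp_involutive t) at 1. rewrite Phi0_opp.
    pose proof (Phi0_le_half (- t) ltac:(lra)). pose proof (half_sub_Phi0_le (- t) ltac:(lra)).
    rewrite Rabs_pos_eq by lra. lra.
Qed.

Definition accept_integrand (c u : R) : R := (1 / 2 - Phi0 (c * u)) * phi u.

Definition accept_primitive (c u : R) : R := Phi0 u / 2 + owenT u c.

(* Integration by parts against [u * phi u = - phi' u]; the last term integrates
   [c u phi (c u) phi u]. *)
Definition speed_primitive (c u : R) : R :=
  accept_primitive c u - u * accept_integrand c u
  + c * exp (- ((1 + c ^ 2) * u ^ 2) / 2) / (2 * PI * (1 + c ^ 2)).

Lemma is_derive_accept_integrand c u :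
  is_derive (accept_integrand c) u (- c * (phi (c * u) * phi u) - u * accept_integrand c u).
Proof.
  unfold accept_integrand. auto_derive_R.
  - repeat split; eexists; [apply is_derive_Phi0|apply is_derive_phi].
  - rewrite (is_derive_unique _ _ _ (is_derive_Phi0 _)),
      (is_derive_unique _ _ _ (is_derive_phi _)). ring.
Qed.

Lemma continuous_accept_integrand c u : continuous (accept_integrand c) u.
Proof. apply continuous_of_ex_derive. eexists. apply is_derive_accept_integrand. Qed.

Lemma is_derive_accept_primitive c u : is_derive (accept_primitive c) u (accept_integrand c u).
Proof.
  unfold accept_primitive, accept_integrand. auto_derive_R.
  - repeat split; eexists; [apply is_derive_Phi0|apply is_derive_owenT].
  - rewrite (is_derive_unique _ _ _ (is_derive_Phi0 _)),
      (is_derive_unique _ _ _ (is_derive_owenT _ _)), (Rmult_comm u c). field.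
Qed.

Lemma is_derive_speed_primitive c u :
  is_derive (speed_primitive c) u (u ^ 2 * accept_integrand c u).
Proof.
  unfold speed_primitive. auto_derive_R.
  - repeat split; eexists; [apply is_derive_accept_primitive|apply is_derive_accept_integrand].
  - rewrite (is_derive_unique _ _ _ (is_derive_accept_primitive _ _)),
      (is_derive_unique _ _ _ (is_derive_accept_integrand _ _)).
    rewrite phi_mul_phi.
    replace (exp (- ((1 + c * (c * 1)) * (u * (u * 1))) * / 2))
      with (exp (- ((c * u) ^ 2 + u ^ 2) / 2)) by (f_equal; field).
    pose proof (pow2_ge_0 c). pose proof PI_RGT_0. field. simpl in *. nra.
Qed.

Lemma accept_primitive_rate c t :
  0 <= c -> 1 <= t -> Rabs (accept_primitive c t - 1 / 4) <= (1 + c) / t.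
Proof.
  intros Hc Ht. unfold accept_primitive.
  pose proof (Phi0_le_half t ltac:(lra)). pose proof (half_sub_Phi0_le t ltac:(lra)).
  pose proof (owenT_le_div t c Hc ltac:(lra)). pose proof (proj1 (owenT_bounds t c Hc)).
  assert (0 <= c / t) by (apply Rdiv_le_0_compat; lra).
  replace (c / (6 * t)) with (c / t / 6) in * by (field; lra).
  replace ((1 + c) / t) with (1 / t + c / t) by (field; lra).
  apply Rabs_le. lra.
Qed.

Lemma exp_cross_term_le c t : 0 <= c -> 0 < t ->
  0 <= c * exp (- ((1 + c ^ 2) * t ^ 2) / 2) / (2 * PI * (1 + c ^ 2)) <= c / t.
Proof.
  intros Hc Ht. pose proof PI2_3_2. pose proof (pow2_ge_0 c). pose proof (pow2_ge_0 t).
  pose proof (proj1 (exp_neg_half_sqr_le t Ht)).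
  assert (exp (- ((1 + c ^ 2) * t ^ 2) / 2) <= exp (- t ^ 2 / 2)) by (apply exp_le; nra).
  pose proof (exp_pos (- ((1 + c ^ 2) * t ^ 2) / 2)).
  split; [apply Rdiv_le_0_compat; nra|].
  apply (Rmult_le_reg_r (2 * PI * (1 + c ^ 2))); [nra|].
  replace (c * exp (- ((1 + c ^ 2) * t ^ 2) / 2) / (2 * PI * (1 + c ^ 2)) * (2 * PI * (1 + c ^ 2)))
    with (c * exp (- ((1 + c ^ 2) * t ^ 2) / 2)) by (field; nra).
  assert (c * exp (- ((1 + c ^ 2) * t ^ 2) / 2) <= c * (1 / t)) by (apply Rmult_le_compat_l; lra).
  assert (0 <= c / t) by (apply Rdiv_le_0_compat; lra).
  assert (c * (1 / t) = c / t) by (field; lra).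
  assert (c / t <= c / t * (2 * PI * (1 + c ^ 2)))
    by (rewrite <- (Rmult_1_r (c / t)) at 1; apply Rmult_le_compat_l; nra).
  lra.
Qed.

Lemma speed_primitive_rate c t :
  0 <= c -> 1 <= t -> Rabs (speed_primitive c t - 1 / 4) <= (2 + 2 * c) / t.
Proof.
  intros Hc Ht. pose proof (proj1 (Rabs_le_between _ _) (accept_primitive_rate c t Hc Ht)).
  unfold speed_primitive, accept_integrand.
  pose proof (Phi0_le_half (c * t) ltac:(nra)). pose proof (Phi0_ge0 (c * t) ltac:(nra)).
  pose proof (exp_neg_half_sqr_le t ltac:(lra)) as [E1 E2].
  pose proof (phi_gt0 t). pose proof (phi_le_exp t).
  pose proof (exp_cross_term_le c t Hc ltac:(lra)).
  assert (Hmid : 0 <= t * ((1 / 2 - Phi0 (c * t)) * phi t) <= 1 / t).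
  { split; [apply Rmult_le_pos; [lra|apply Rmult_le_pos; lra]|].
    replace (1 / t) with (1 / 2 * (2 / t)) by (field; lra).
    replace (t * ((1 / 2 - Phi0 (c * t)) * phi t)) with ((1 / 2 - Phi0 (c * t)) * (t * phi t)) by ring.
    apply Rmult_le_compat; try lra; nra. }
  replace ((2 + 2 * c) / t) with ((1 + c) / t + 1 / t + c / t) by (field; lra).
  apply Rabs_le. lra.
Qed.

Lemma is_RInt_gen_accept_integrand c : 0 <= c ->
  is_RInt_gen (accept_integrand c) (at_point 0) (Rbar_locally p_infty) (1 / 4 - atan c / (2 * PI)).
Proof.
  intros Hc.
  replace (1 / 4 - atan c / (2 * PI)) with (1 / 4 - accept_primitive c 0)
    by (unfold accept_primitive; rewrite Phi0_0, owenT_0; field; pose proof PI_RGT_0; lra).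
  apply (is_RInt_gen_at_point_p_infty _ _ _ (1 + c)).
  - intros b. apply is_RInt_of_is_derive;
      [apply is_derive_accept_primitive|apply continuous_accept_integrand].
  - intros t Ht. apply accept_primitive_rate; lra.
Qed.

Lemma is_RInt_gen_speed_integrand c : 0 <= c ->
  is_RInt_gen (fun u => u ^ 2 * accept_integrand c u) (at_point 0) (Rbar_locally p_infty)
    (1 / 4 - atan c / (2 * PI) - c / (2 * PI * (1 + c ^ 2))).
Proof.
  intros Hc. pose proof PI_RGT_0. pose proof (pow2_ge_0 c).
  replace (1 / 4 - atan c / (2 * PI) - c / (2 * PI * (1 + c ^ 2)))
    with (1 / 4 - speed_primitive c 0).
  2:{ unfold speed_primitive, accept_primitive.
      replace (- ((1 + c ^ 2) * 0 ^ 2) / 2) with 0 by field.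
      rewrite Phi0_0, owenT_0, exp_0. field. lra. }
  apply (is_RInt_gen_at_point_p_infty _ _ _ (2 + 2 * c)).
  - intros b. apply is_RInt_of_is_derive; [apply is_derive_speed_primitive|].
    intros u. apply continuous_of_ex_derive. auto_derive.
    eexists; apply is_derive_accept_integrand.
  - intros t Ht. apply speed_primitive_rate; lra.
Qed.

Definition scaled_speed (c : R) : R := c ^ 2 * (PI / 2 - atan c - c / (1 + c ^ 2)).

Lemma Phi_neg_scaled I l u :
  Phi (- (u * l * sqrt I) / 2) = 1 / 2 - Phi0 (l * sqrt I / 2 * u).
Proof.
  rewrite Phi_eq. replace (- (u * l * sqrt I) / 2) with (- (l * sqrt I / 2 * u)) by field.
  rewrite Phi0_opp. ring.
Qed.

Lemma alpha_eq I l : 0 <= l -> alpha I l = 1 - 2 * atan (l * sqrt I / 2) / PI.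
Proof.
  intros Hl. set (c := l * sqrt I / 2).
  assert (Hc : 0 <= c) by (unfold c; pose proof (sqrt_pos I); nra).
  unfold alpha.
  replace (fun u => Phi (- (u * l * sqrt I) / 2) * phi u) with (accept_integrand c)
    by (apply functional_extensionality; intros u; rewrite Phi_neg_scaled; reflexivity).
  rewrite (is_RInt_gen_unique _ _ (is_RInt_gen_accept_integrand c Hc)).
  field. pose proof PI_RGT_0. lra.
Qed.

Lemma g_eq I l : 0 < I -> 0 <= l -> g I l = 8 / (PI * I) * scaled_speed (l * sqrt I / 2).
Proof.
  intros HI Hl. set (c := l * sqrt I / 2).
  assert (Hc : 0 <= c) by (unfold c; pose proof (sqrt_pos I); nra).
  unfold g.
  replace (fun u => u ^ 2 * Phi (- (u * l * sqrt I) / 2) * phi u)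
    with (fun u => u ^ 2 * accept_integrand c u)
    by (apply functional_extensionality; intros u; unfold accept_integrand;
        rewrite Phi_neg_scaled; fold c; ring).
  rewrite (is_RInt_gen_unique _ _ (is_RInt_gen_speed_integrand c Hc)).
  unfold scaled_speed, c. pose proof PI_RGT_0.
  assert (HIs : I = sqrt I * sqrt I) by (symmetry; apply sqrt_sqrt; lra).
  pose proof (sqrt_lt_R0 I HI). set (s := sqrt I) in *. rewrite HIs.
  pose proof (pow2_ge_0 (l * s / 2)). field. repeat split; lra.
Qed.

Definition atan_taylor (n : nat) (x : R) : R :=
  sum_f_R0 (fun k => (-1) ^ k * x ^ (2 * k + 1) / INR (2 * k + 1)) n.

Lemma is_derive_atan_taylor_term k x :
  is_derive (fun x => (-1) ^ k * x ^ (2 * k + 1) / INR (2 * k + 1)) x ((- x ^ 2) ^ k).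
Proof.
  assert (Hk : INR (2 * k + 1) <> 0) by (apply not_0_INR; lia).
  auto_derive_R; [exact I|].
  replace (k + (k + 0) + 1)%nat with (2 * k + 1)%nat by lia.
  replace (Init.Nat.pred (2 * k + 1)) with (2 * k)%nat by lia.
  replace (- x ^ 2) with (-1 * x ^ 2) by ring.
  rewrite Rpow_mult_distr, pow_mult. field. exact Hk.
Qed.

Lemma is_derive_atan_taylor n x :
  is_derive (atan_taylor n) x (sum_f_R0 (fun k => (- x ^ 2) ^ k) n).
Proof.
  induction n as [|n IH].
  - apply (is_derive_atan_taylor_term 0).
  - apply (is_derive_plus (atan_taylor n)); [exact IH|apply is_derive_atan_taylor_term].
Qed.

Lemma is_derive_atan_sub_taylor n x :
  is_derive (fun x => atan x - atan_taylor n x) x ((-1) ^ S n * x ^ (2 * S n) / (1 + x ^ 2)).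
Proof.
  pose proof (pow2_ge_0 x).
  replace ((-1) ^ S n * x ^ (2 * S n) / (1 + x ^ 2))
    with (/ (1 + x ^ 2) - sum_f_R0 (fun k => (- x ^ 2) ^ k) n).
  - apply (is_derive_minus atan);
      [apply is_derive_Reals, derivable_pt_lim_atan|apply is_derive_atan_taylor].
  - rewrite tech3 by lra. rewrite pow_mult, <- Rpow_mult_distr.
    replace (-1 * x ^ 2) with (- x ^ 2) by ring. field. lra.
Qed.

Lemma atan_taylor_0 n : atan_taylor n 0 = 0.
Proof. apply sum_eq_R0. intros k _. rewrite pow_i by lia. unfold Rdiv. ring. Qed.

Lemma pow_even_ge0 n x : 0 <= x ^ (2 * n).
Proof. rewrite pow_mult. apply pow_le, pow2_ge_0. Qed.

Lemma atan_taylor_odd_le n x : 0 <= x -> atan_taylor (S (2 * n)) x <= atan x.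
Proof.
  intros Hx.
  enough (atan 0 - atan_taylor (S (2 * n)) 0 <= atan x - atan_taylor (S (2 * n)) x)
    by (rewrite atan_0, atan_taylor_0 in *; lra).
  apply (nondecr_of_is_derive_nonneg _ _ 0 x Hx (is_derive_atan_sub_taylor _)).
  intros y _. replace (S (S (2 * n))) with (2 * S n)%nat by lia.
  rewrite pow_1_even, Rmult_1_l. pose proof (pow2_ge_0 y).
  apply Rdiv_le_0_compat; [apply pow_even_ge0|lra].
Qed.

Lemma atan_le_atan_taylor_even n x : 0 <= x -> atan x <= atan_taylor (2 * n) x.
Proof.
  intros Hx.
  enough (- (atan 0 - atan_taylor (2 * n) 0) <= - (atan x - atan_taylor (2 * n) x))
    by (rewrite atan_0, atan_taylor_0 in *; lra).
  apply (nondecr_of_is_derive_nonneg _ _ 0 x Hx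
           (fun y => is_derive_opp _ _ _ (is_derive_atan_sub_taylor _ y))).
  intros y _. rewrite pow_1_odd. pose proof (pow2_ge_0 y).
  assert (0 <= y ^ (2 * S (2 * n)) / (1 + y ^ 2)) by (apply Rdiv_le_0_compat; [apply pow_even_ge0|lra]).
  change (0 <= - (-1 * y ^ (2 * S (2 * n)) / (1 + y ^ 2))). unfold Rdiv in *. lra.
Qed.

Lemma atan_shift c : 0 < c -> atan c = PI / 4 + atan ((c - 1) / (c + 1)).
Proof.
  intros Hc. rewrite <- atan_1.
  assert (0 < atan c) by (rewrite <- atan_0; apply atan_increasing; exact Hc).
  pose proof (atan_bound c). pose proof PI_RGT_0.
  replace ((c - 1) / (c + 1)) with (atan_sub c 1) by (unfold atan_sub; field; lra).
  apply atan_sub_correct; [lra|rewrite atan_1; lra|apply atan_bound].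
Qed.

Lemma PI_bounds :
  2 * atan_taylor 9 (1 / 3) + atan_taylor 9 (1 / 7) <= PI / 4 <=
  2 * atan_taylor 8 (1 / 3) + atan_taylor 8 (1 / 7).
Proof.
  rewrite Machin_2_3_7. replace (/ 3) with (1 / 3) by field. replace (/ 7) with (1 / 7) by field.
  pose proof (atan_taylor_odd_le 4 (1 / 3) ltac:(lra)).
  pose proof (atan_taylor_odd_le 4 (1 / 7) ltac:(lra)).
  pose proof (atan_le_atan_taylor_even 4 (1 / 3) ltac:(lra)).
  pose proof (atan_le_atan_taylor_even 4 (1 / 7) ltac:(lra)).
  simpl in *. lra.
Qed.

Definition speed_slope (c : R) : R :=
  PI / 2 - atan c - c / (1 + c ^ 2) - c / (1 + c ^ 2) ^ 2.

Lemma is_derive_scaled_speed c : is_derive scaled_speed c (2 * c * speed_slope c).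
Proof.
  unfold scaled_speed, speed_slope. pose proof (pow2_ge_0 c).
  auto_derive_R; [simpl in *; repeat split; lra|]. field. simpl in *. lra.
Qed.

Lemma is_derive_speed_slope c : is_derive speed_slope c ((c ^ 2 - 3) / (1 + c ^ 2) ^ 3).
Proof.
  unfold speed_slope. pose proof (pow2_ge_0 c).
  auto_derive_R; [simpl in *; repeat split; nra|]. field. simpl in *. lra.
Qed.

Lemma speed_slope_decr a b : 0 <= a < b -> b ^ 2 <= 3 -> speed_slope b < speed_slope a.
Proof.
  intros Hab Hb. apply Ropp_lt_cancel.
  apply (incr_of_is_derive_pos (fun c => - speed_slope c) _ a b ltac:(lra)
           (fun c => is_derive_opp _ _ _ (is_derive_speed_slope c))).
  intros c Hc. pose proof (pow2_ge_0 c).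
  assert (0 < (1 + c ^ 2) ^ 3) by (apply pow_lt; lra).
  assert (c ^ 2 < 3) by nra.
  change (0 < - ((c ^ 2 - 3) / (1 + c ^ 2) ^ 3)).
  unfold Rdiv. rewrite Ropp_mult_distr_l. apply Rmult_lt_0_compat; [lra|].
  apply Rinv_0_lt_compat. lra.
Qed.

(* With [x = 1 / c], [speed_slope c = atan x - x / (1 + x^2) - x^3 / (1 + x^2)^2], and the
   Taylor bound [atan x <= x - x^3/3 + x^5/5] makes this negative once [x^2 <= 1/3]. *)
Lemma speed_slope_neg c : 0 < c -> 3 <= c ^ 2 -> speed_slope c < 0.
Proof.
  intros Hc H3. set (x := / c).
  assert (Hx : 0 < x) by (apply Rinv_0_lt_compat; exact Hc).
  assert (Hx2 : x ^ 2 <= 1 / 3).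
  { replace (x ^ 2) with (/ c ^ 2) by (unfold x; field; lra).
    unfold Rdiv. rewrite Rmult_1_l. apply Rinv_le_contravar; lra. }
  assert (E : speed_slope c = atan x - x / (1 + x ^ 2) - x ^ 3 / (1 + x ^ 2) ^ 2).
  { unfold speed_slope, x. rewrite atan_inv by exact Hc. field. pose proof (pow2_ge_0 c). lra. }
  pose proof (atan_le_atan_taylor_even 1 x ltac:(lra)) as Hatan.
  replace (atan_taylor (2 * 1) x) with (x - x ^ 3 / 3 + x ^ 5 / 5) in Hatan
    by (unfold atan_taylor; simpl; field).
  pose proof (pow2_ge_0 x).
  assert (Hpoly : (x - x ^ 3 / 3 + x ^ 5 / 5 - x / (1 + x ^ 2) - x ^ 3 / (1 + x ^ 2) ^ 2)
                  * (1 + x ^ 2) ^ 2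
                  = x ^ 3 * (- 1 / 3 + 8 * x ^ 2 / 15 + x ^ 4 / 15 + x ^ 6 / 5))
    by (field; lra).
  assert (- 1 / 3 + 8 * x ^ 2 / 15 + x ^ 4 / 15 + x ^ 6 / 5 < 0).
  { replace (x ^ 4) with (x ^ 2 * x ^ 2) by ring.
    replace (x ^ 6) with (x ^ 2 * x ^ 2 * x ^ 2) by ring. nra. }
  assert (0 < x ^ 3) by (apply pow_lt; lra).
  assert (0 < (1 + x ^ 2) ^ 2) by (apply pow_lt; lra).
  assert (x - x ^ 3 / 3 + x ^ 5 / 5 - x / (1 + x ^ 2) - x ^ 3 / (1 + x ^ 2) ^ 2 < 0) by nra.
  rewrite E. lra.
Qed.

Lemma atan_between_taylor x : 0 <= x -> atan_taylor 9 x <= atan x <= atan_taylor 8 x.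
Proof. intros Hx. exact (conj (atan_taylor_odd_le 4 x Hx) (atan_le_atan_taylor_even 4 x Hx)). Qed.

(* [atan_shift] moves the argument of [atan] from [~1.213] to [~0.096], where the degree
   17 and 19 Taylor polynomials are accurate far beyond what is needed. *)
Ltac bound_atan_near c :=
  rewrite (atan_shift c) by lra;
  pose proof PI_bounds;
  pose proof (atan_between_taylor ((c - 1) / (c + 1)) ltac:(lra));
  unfold atan_taylor in *; simpl in *; lra.

Lemma speed_slope_lower_pos : 0 < speed_slope (12130 / 10000).
Proof. unfold speed_slope. bound_atan_near (12130 / 10000). Qed.

Lemma speed_slope_upper_neg : speed_slope (121324 / 100000) < 0.
Proof. unfold speed_slope. bound_atan_near (121324 / 100000). Qed.

Lemma atan_lower_ge : 8812 / 10000 <= atan (12130 / 10000).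
Proof. bound_atan_near (12130 / 10000). Qed.

Lemma atan_upper_le : atan (121324 / 100000) <= 8816 / 10000.
Proof. bound_atan_near (121324 / 100000). Qed.

Lemma PI_approx : 31415 / 10000 <= PI <= 31416 / 10000.
Proof. pose proof PI_bounds. unfold atan_taylor in *. simpl in *. lra. Qed.

Lemma speed_slope_root :
  exists cs, 12130 / 10000 <= cs <= 121324 / 100000 /\ speed_slope cs = 0.
Proof.
  destruct (IVT (fun c => - speed_slope c) (12130 / 10000) (121324 / 100000)) as [cs [Hcs H0]].
  - intros c. apply continuity_pt_opp, derivable_continuous_pt.
    exists ((c ^ 2 - 3) / (1 + c ^ 2) ^ 3). apply is_derive_Reals, is_derive_speed_slope.
  - lra.
  - pose proof speed_slope_lower_pos. lra.
  - pose proof speed_slope_upper_neg. lra.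
  - exists cs. split; [exact Hcs|lra].
Qed.

Lemma scaled_speed_argmax :
  exists cs, 12130 / 10000 <= cs <= 121324 / 100000 /\
    forall c, 0 < c -> c <> cs -> scaled_speed c < scaled_speed cs.
Proof.
  destruct speed_slope_root as [cs [Hcs Hroot]]. exists cs. split; [exact Hcs|].
  assert (Hpos : forall x, 0 < x < cs -> 0 < speed_slope x).
  { intros x Hx. rewrite <- Hroot. apply speed_slope_decr; nra. }
  assert (Hneg : forall x, cs < x -> speed_slope x < 0).
  { intros x Hx. destruct (Rle_lt_dec (x ^ 2) 3).
    - rewrite <- Hroot. apply speed_slope_decr; lra.
    - apply speed_slope_neg; lra. }
  intros c Hc Hne. destruct (Rlt_le_dec c cs) as [Hlt|Hle].
  - apply (incr_of_is_derive_pos _ _ c cs Hlt is_derive_scaled_speed).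
    intros x Hx. pose proof (Hpos x ltac:(lra)). nra.
  - apply Ropp_lt_cancel.
    apply (incr_of_is_derive_pos _ _ cs c ltac:(lra)
             (fun x => is_derive_opp _ _ _ (is_derive_scaled_speed x))).
    intros x Hx. pose proof (Hneg x ltac:(lra)). change (0 < - (2 * x * speed_slope x)). nra.
Qed.

Lemma acceptance_near_opt cs : 12130 / 10000 <= cs <= 121324 / 100000 ->
  Rabs (1 - 2 * atan cs / PI - 439 / 1000) < 5 / 10000.
Proof.
  intros Hcs.
  assert (atan (12130 / 10000) <= atan cs <= atan (121324 / 100000)) as [Hl Hu].
  { split; [destruct (proj1 Hcs) as [H| <-]|destruct (proj2 Hcs) as [H| ->]];
      try (left; apply atan_increasing; exact H); lra. }
  pose proof atan_lower_ge. pose proof atan_upper_le. pose proof PI_approx.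
  apply Rabs_def1; apply (Rmult_lt_reg_r PI); try lra;
    unfold Rdiv; rewrite !Rmult_minus_distr_r, Rmult_assoc, Rinv_l; lra.
Qed.

Theorem corollary1 (I : R) (HI : 0 < I) :
  exists lopt : R,
    0 < lopt /\
    (forall l : R, 0 < l -> g I l <= g I lopt) /\
    (forall l : R, 0 < l -> (forall l' : R, 0 < l' -> g I l' <= g I l) -> l = lopt) /\
    Rabs (lopt * sqrt I - 2426 / 1000) < 5 / 10000 /\
    Rabs (alpha I lopt - 439 / 1000) < 5 / 10000.
Proof.
  destruct scaled_speed_argmax as [cs [Hcs Hmax]].
  pose proof (sqrt_lt_R0 I HI). pose proof PI_RGT_0.
  assert (HK : 0 < 8 / (PI * I)) by (apply Rdiv_lt_0_compat; nra).
  assert (Hlopt : 0 < 2 * cs / sqrt I) by (apply Rdiv_lt_0_compat; lra).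
  assert (Hopt : 2 * cs / sqrt I * sqrt I / 2 = cs) by (field; lra).
  exists (2 * cs / sqrt I). repeat split; [exact Hlopt| | | |].
  - intros l Hl. rewrite !g_eq, Hopt by lra. apply Rmult_le_compat_l; [lra|].
    destruct (Req_dec (l * sqrt I / 2) cs) as [-> | Hne]; [lra|].
    left. apply Hmax; [nra|exact Hne].
  - intros l Hl Hlmax. specialize (Hlmax _ Hlopt). rewrite !g_eq, Hopt in Hlmax by lra.
    destruct (Req_dec (l * sqrt I / 2) cs) as [E | Hne]; [rewrite <- E; field; lra|].
    pose proof (Hmax (l * sqrt I / 2) ltac:(nra) Hne). exfalso. nra.
  - replace (2 * cs / sqrt I * sqrt I) with (2 * cs) by (field; lra). apply Rabs_def1; lra.
  - rewrite alpha_eq, Hopt by lra. apply acceptance_near_opt, Hcs.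
Qed.
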